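(* Let $\bar{\mathbb{P}}\in\mathcal{M}_1$ and let $\alpha$ be of the form $\alpha(Q)=\widetilde\alpha(Q)$ for $Q\in\mathcal{Q}^{\bar{\mathbb{P}}}$ and $\alpha(Q)=+\infty$ for $Q\in\mathcal{M}_1\setminus\mathcal{Q}^{\bar{\mathbb{P}}}$, where $\mathcal{Q}^{\bar{\mathbb{P}}}$ is a weak-$*$-closed subset of $\mathcal{P}^{\bar{\mathbb{P}}}$, $\widetilde\alpha(Q)<\infty$ for all $Q\in\mathcal{Q}^{\bar{\mathbb{P}}}$ and $\inf_{Q\in\mathcal{Q}^{\bar{\mathbb{P}}}}\widetilde\alpha(Q)>-\infty$. Then for every $P\in\mathcal{M}_1$ satisfying either $\bar{\mathbb{P}}\ll P$ or $\bar{\mathbb{P}}\perp P$ we have $C^P=\widehat C^P$ and $\rho^P=\widehat\rho^P=\widetilde\rho^P$, i.e. for all $X\in L^\infty(P)$ $$\sup_{Q\in\mathcal{Q}^{\bar{\mathbb{P}}}}\inf_{\{\widetilde X\in\mathcal{X}:P(\widetilde X=X)=1\}}\{\mathbb{E}_Q[-\widetilde X]-\widetilde\alpha(Q)\}=\inf_{\{\widetilde X\in\mathcal{X}:P(\widetilde X=X)=1\}}\sup_{Q\in\mathcal{Q}^{\bar{\mathbb{P}}}}\{\mathbb{E}_Q[-\widetilde X]-\widetilde\alpha(Q)\}=\rho^P(X).$$ In particular, if $\bar{\mathbb{P}}\ll P$ then the restriction of $\rho^P=\widehat\rho^P=\widetilde\rho^P$ to $\mathcal{X}$ equals $\rho$,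 and if $\bar{\mathbb{P}}\perp P$ then $\rho^P=\widehat\rho^P=\widetilde\rho^P\equiv-\infty$. Moreover, for all $P\in\mathcal{M}_1$, $$\widehat\rho^P|_{\mathcal{X}}\le\rho^P|_{\mathcal{X}}\le\rho=\rho^{\bar{\mathbb{P}}}|_{\mathcal{X}}=\widehat\rho^{\bar{\mathbb{P}}}|_{\mathcal{X}},$$ and $\widehat\rho^P\le\rho^P\le\rho^{\bar{\mathbb{P}}}=\widehat\rho^{\bar{\mathbb{P}}}$ on $L^\infty(P)\cap L^\infty(\bar{\mathbb{P}})$.
   Context: $(\Omega,\mathcal{F})$ is a measurable space, $\mathcal{M}_1$ the set of probability measures on it endowed with the topology of weak (weak-$*$) convergence, $\mathcal{X}$ the space of pointwise bounded $\mathcal{F}$-measurable real functions, $L^\infty(P)=L^\infty(\Omega,\mathcal{F},P)$, $\mathcal{P}^P=\{Q\in\mathcal{M}_1:Q\ll P\}$. With $\alpha$ as in the claim, $\rho(X):=\sup_{Q\in\mathcal{M}_1}\{\mathbb{E}_Q[-X]-\alpha(Q)\}$ for $X\in\mathcal{X}$ (assumed real-valued). For $P\in\mathcal{M}_1$ and $X\in L^\infty(P)$: $\rho^P(X)=\inf_{\{\widetilde X\in\mathcal{X}:P(\widetilde X=X)=1\}}\rho(\widetilde X)$; $\widehat\rho^P(X)=\sup_{Q\in\mathcal{P}^P}\{\mathbb{E}_Q[-X]-\alpha(Q)\}$; $\widetilde\rho^P(X)=\sup_{Q\in\mathcal{M}_1}\inf_{\{\widetilde X\in\mathcal{X}:P(\widetilde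 X=X)=1\}}\{\mathbb{E}_Q[-\widetilde X]-\alpha(Q)\}$; $C^P=\{X\in L^\infty(P):\rho^P(X)\le0\}$, $\widehat C^P=\{X\in L^\infty(P):\widehat\rho^P(X)\le0\}$. *)

From HB Require Import structures.
From mathcomp Require Import all_boot all_order all_algebra.
From mathcomp Require Import all_classical all_reals all_analysis.
Set Implicit Arguments. Unset Strict Implicit. Unset Printing Implicit Defensive.
Import Order.TTheory GRing.Theory Num.Theory.
Local Open Scope classical_set_scope.
Local Open Scope ring_scope.

Section RiskDefs.
Context {d : measure_display} {T : measurableType d} {R : realType}.

(* M_1 is the type [probability T R]. *)

Definition bdd_meas (X : T -> R) : Prop :=
  measurable_fun setT X /\ exists M : R, forall w, `|X w| <= M.

(* representatives of elements of L^infty(P): measurable, P-essentially bounded *)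
Definition Linf (P : probability T R) (X : T -> R) : Prop :=
  measurable_fun setT X /\ exists M : R, {ae P, forall w, `|X w| <= M}.

Definition singular (P1 P2 : probability T R) : Prop :=
  exists A, measurable A /\ P1 A = 0%E /\ P2 (~` A) = 0%E.

Definition expect (Q : probability T R) (X : T -> R) : \bar R :=
  (\int[Q]_w (X w)%:E)%E.

(* weak(-star) closedness in M_1: closed for the coarsest topology making
   Q |-> E_Q[X] continuous for every X in the space of bounded measurable
   functions; i.e. every point outside C has a basic neighbourhood
   { Q' : |E_Q'[X_i] - E_Q[X_i]| < e, i < n } disjoint from C. *)
Definition weak_closed (C : set (probability T R)) : Prop :=
  forall Q, ~ C Q ->
    exists (n : nat) (Xs : nat -> T -> R) (e : R), 0 < e /\
      (forall i, (i < n)%N -> bdd_meas (Xs i)) /\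
      (forall Q' : probability T R,
         (forall i, (i < n)%N ->
            (`| expect Q' (Xs i) - expect Q (Xs i) | < e%:E)%E) ->
         ~ C Q').

Variable alpha : probability T R -> \bar R.

Definition rho (X : T -> R) : \bar R :=
  ereal_sup (range (fun Q => (expect Q (fun w => (- X w)%R) - alpha Q)%E)).

Definition reps (P : probability T R) (X : T -> R) : set (T -> R) :=
  [set Xt | bdd_meas Xt /\ P [set w | Xt w = X w] = 1%E].

Definition rhoP (P : probability T R) (X : T -> R) : \bar R :=
  ereal_inf [set rho Xt | Xt in reps P X].

Definition rhohat (P : probability T R) (X : T -> R) : \bar R :=
  ereal_sup [set (expect Q (fun w => (- X w)%R) - alpha Q)%E
            | Q in [set Q : probability T R | Q `<< P]].

Definition rhotilde (P : probability T R) (X : T -> R) : \bar R :=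
  ereal_sup (range (fun Q : probability T R =>
    ereal_inf [set (expect Q (fun w => (- Xt w)%R) - alpha Q)%E | Xt in reps P X])).

(* acceptance sets C^P and hat C^P (as sets of representatives) *)
Definition accP (P : probability T R) : set (T -> R) :=
  [set X | Linf P X /\ (rhoP P X <= 0)%E].
Definition acchat (P : probability T R) : set (T -> R) :=
  [set X | Linf P X /\ (rhohat P X <= 0)%E].

End RiskDefs.

From HB Require Import structures.
From mathcomp Require Import all_boot all_order all_algebra.
From mathcomp Require Import all_classical all_reals all_analysis.
From mathcomp Require Import measurable_realfun.
Import Order.TTheory GRing.Theory Num.Theory.

(* Off [Qset] the penalty is [+oo], so each risk measure involved is a
   supremum over [Qset] only, and every [Q] in [Qset] is dominated by [Pbar].
   If [Pbar << P], representatives of [X] that agree [P]-a.s. agree [Q]-a.s.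
   for all these [Q], so infima over representatives are attained by any of
   them and everything collapses to [rho X].  If [Pbar A = 0 = P (~` A)], a
   representative may be set to an arbitrary constant [c] on the [P]-null set
   [~` A], which carries all the mass of every [Q] in [Qset]; the penalized
   expectations then drop below [- c - inf alpha_t], hence to [-oo].  The
   inequalities for general [P] compare [X] with a truncation representing it
   under both [P] and [Pbar]. *)

Set Implicit Arguments.
Unset Strict Implicit.
Local Open Scope classical_set_scope.
Local Open Scope ring_scope.

Section ereal_sup_inf.
Context {R : realType}.
Local Open Scope ereal_scope.

Lemma ereal_sup_image_restrict (U : Type) (A B : set U) (f g : U -> \bar R) :
  B `<=` A -> (forall x, A x -> ~ B x -> f x = -oo) ->
  (forall x, B x -> f x = g x) -> ereal_sup (f @` A) = ereal_sup (g @` B).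
Proof.
move=> BA fAB fgB; apply/eqP; rewrite eq_le; apply/andP; split.
  apply: ge_ereal_sup => _ [x Ax <-]; have [Bx|nBx] := pselect (B x).
    by rewrite fgB //; apply: ereal_sup_ubound; exists x.
  by rewrite fAB // leNye.
apply: ge_ereal_sup => _ [x Bx <-]; rewrite -fgB //.
by apply: ereal_sup_ubound; exists x => //; exact: BA.
Qed.

Lemma ereal_inf_image_cst (U : Type) (A : set U) (f : U -> \bar R) c :
  A !=set0 -> (forall x, A x -> f x = c) -> ereal_inf (f @` A) = c.
Proof.
move=> [x0 Ax0] fc; suff -> : f @` A = [set c] by rewrite ereal_inf1.
apply/seteqP; split => y /=; first by move=> [x Ax <-]; rewrite fc.
by move=> ->; exists x0 => //; rewrite fc.
Qed.

Lemma ereal_sup_inf_le_inf_sup (U V : Type) (A : set U) (B : set V)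
    (f : U -> V -> \bar R) :
  ereal_sup [set ereal_inf [set f x y | y in B] | x in A] <=
  ereal_inf [set ereal_sup [set f x y | x in A] | y in B].
Proof.
apply: ge_ereal_sup => _ [x Ax <-]; apply: le_ereal_inf_tmp => _ [y By <-].
apply: (@le_trans _ _ (f x y)); first by apply: ereal_inf_lbound; exists y.
by apply: ereal_sup_ubound; exists x.
Qed.

End ereal_sup_inf.

Section representatives.
Context {d : measure_display} {T : measurableType d} {R : realType}.
Implicit Types (P Q : probability T R) (X Y : T -> R).

Lemma measurable_eq_set X Y : measurable_fun setT X -> measurable_fun setT Y ->
  measurable [set w | X w = Y w].
Proof.
move=> mX mY; rewrite (_ : [set w | X w = Y w] = (X \- Y) @^-1` [set 0]).
  by rewrite -[_ @^-1` _]setTI; apply: measurable_funB.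
by apply/seteqP; split => w /=; [move=> ->; rewrite subrr | move/subr0_eq].
Qed.

Lemma repsP P X Y : measurable_fun setT X ->
  reps P X Y <-> bdd_meas Y /\ Y = X %[ae P].
Proof.
move=> mX; split=> -[bY YX]; split => //; have mYX := measurable_eq_set bY.1 mX.
  exists (~` [set w | Y w = X w]); split; first exact: measurableC.
    by rewrite probability_setC // YX subee.
  by move=> w /= nYX YXw; apply: nYX.
case: YX => N [mN PN0 NYX].
rewrite -[S in P S]setCK probability_setC; last exact: measurableC.
rewrite (@subset_measure0 _ _ _ P _ N) ?sube0 //; first exact: measurableC.
by move=> w /= nYX; apply: NYX => /= YXw; apply/nYX/YXw.
Qed.

Lemma bdd_meas_Linf P X : bdd_meas X -> Linf P X.
Proof. by move=> [mX [M XM]]; split => //; exists M; apply: aeW. Qed.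

Lemma reps_refl P X : bdd_meas X -> reps P X X.
Proof. by move=> bX; apply/repsP; [case: bX | split => //; apply: aeW]. Qed.

Definition trunc M X : T -> R := fun w => X w * \1_[set w | `|X w| <= M] w.

Lemma bdd_meas_trunc M X : measurable_fun setT X -> bdd_meas (trunc M X).
Proof.
move=> mX; have mXM : measurable [set w | `|X w| <= M].
  rewrite (_ : [set w | _] = X @^-1` `[- M, M]); last first.
    by apply/seteqP; split => w /=; rewrite in_itv /= ler_norml.
  by rewrite -[_ @^-1` _]setTI; apply: mX.
split; first exact/measurable_funM/measurable_indic.
exists `|M| => w; rewrite /trunc indicE.
have [/set_mem /= XM|_] := boolP (w \in _); last by rewrite mulr0 normr0.
by rewrite mulr1 (le_trans XM) // ler_norm.
Qed.

Lemma reps_trunc P M X : measurable_fun setT X ->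
  {ae P, forall w, `|X w| <= M} -> reps P X (trunc M X).
Proof.
move=> mX XM; apply/repsP => //; split; first exact: bdd_meas_trunc.
apply: filterS XM => w XMw _.
by rewrite /trunc indicE (mem_set (XMw : [set w | `|X w| <= M] w)) mulr1.
Qed.

Lemma Linf_common_reps P P' X : Linf P X -> Linf P' X ->
  exists Y, reps P X Y /\ reps P' X Y.
Proof.
move=> [mX [M XM]] [_ [M' XM']].
exists (trunc (Num.max M M') X); split; apply: reps_trunc => //.
  by apply: filterS XM => w /le_trans; apply; rewrite le_max lexx.
by apply: filterS XM' => w /le_trans; apply; rewrite le_max lexx orbT.
Qed.

Lemma Linf_reps P X : Linf P X -> reps P X !=set0.
Proof. by move=> LX; have [Y [PY _]] := Linf_common_reps LX LX; exists Y. Qed.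

Lemma expect_reps P Q X Y : Q `<< P -> measurable_fun setT X -> reps P X Y ->
  expect Q (fun w => - Y w) = expect Q (fun w => - X w).
Proof.
move=> QP mX /(repsP _ _ mX) [[mY _] YX]; apply: ae_eq_integral => //.
- exact/measurable_EFinP/measurable_funN.
- exact/measurable_EFinP/measurable_funN.
apply: (null_dominates_ae_eq measurableT QP).
by apply: filterS YX => w YXw /YXw ->.
Qed.

End representatives.

Section risk_measures.
Context {d : measure_display} {T : measurableType d} {R : realType}.
Implicit Types (P Q : probability T R) (X Y : T -> R).
Variable alpha : probability T R -> \bar R.
Local Open Scope ereal_scope.

Lemma rhoP_le_rho P X Y : reps P X Y -> rhoP alpha P X <= rho alpha Y.
Proof. by move=> PY; apply: ereal_inf_lbound; exists Y. Qed.

Lemma rhohat_le_rhoP P X : measurable_fun setT X ->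
  rhohat alpha P X <= rhoP alpha P X.
Proof.
move=> mX; apply: le_ereal_inf_tmp => _ [Y PY <-].
apply: ge_ereal_sup => _ [Q QP <-]; rewrite -(expect_reps QP mX PY).
by apply: ereal_sup_ubound; exists Q.
Qed.

Lemma accP_eq_acchat P :
  (forall X, Linf P X -> rhoP alpha P X = rhohat alpha P X) ->
  accP alpha P = acchat alpha P.
Proof.
move=> rhoPE; apply/seteqP; split => X [LX XA]; split => //.
  by rewrite -rhoPE.
by rewrite rhoPE.
Qed.

End risk_measures.

Section penalty_on_Qset.
Context {d : measure_display} {T : measurableType d} {R : realType}.
Implicit Types (P Q : probability T R) (X Y : T -> R).
Variables (Pbar : probability T R) (Qset : set (probability T R))
  (alpha_t alpha : probability T R -> \bar R).
Hypothesis Qset_dominated : forall Q, Qset Q -> Q `<< Pbar.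
Hypothesis alpha_t_lbound : (-oo < ereal_inf (alpha_t @` Qset))%E.
Hypothesis alpha_Qset : forall Q, Qset Q -> alpha Q = alpha_t Q.
Hypothesis alpha_notQset : forall Q, ~ Qset Q -> alpha Q = +oo%E.
Local Open Scope ereal_scope.

Definition rhoQ Y : \bar R :=
  ereal_sup [set expect Q (fun w => (- Y w)%R) - alpha_t Q | Q in Qset].

Definition rhoQ_supinf P X : \bar R :=
  ereal_sup [set ereal_inf [set expect Q (fun w => (- Y w)%R) - alpha_t Q
                            | Y in reps P X] | Q in Qset].

Definition rhoQ_infsup P X : \bar R := ereal_inf [set rhoQ Y | Y in reps P X].

Lemma penalty_notQset Q (e : \bar R) : ~ Qset Q -> e - alpha Q = -oo.
Proof. by move=> /alpha_notQset ->; rewrite addeNy. Qed.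

Lemma rho_rhoQ Y : rho alpha Y = rhoQ Y.
Proof.
apply: ereal_sup_image_restrict => // Q.
  by move=> _; exact: penalty_notQset.
by move=> /alpha_Qset ->.
Qed.

Lemma rhoP_infsup P X : rhoP alpha P X = rhoQ_infsup P X.
Proof. by congr ereal_inf; apply: eq_imagel => Y _; exact: rho_rhoQ. Qed.

Lemma rhotilde_supinf P X : Linf P X -> rhotilde alpha P X = rhoQ_supinf P X.
Proof.
move=> /Linf_reps reps0; apply: ereal_sup_image_restrict => // Q.
  by move=> _ nQ; apply: ereal_inf_image_cst => // Y _; exact: penalty_notQset.
by move=> /alpha_Qset aQ; congr ereal_inf; apply: eq_imagel => Y _; rewrite aQ.
Qed.

Lemma rhohat_Qset P X : rhohat alpha P X =
  ereal_sup [set expect Q (fun w => (- X w)%R) - alpha_t Q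
            | Q in Qset `&` [set Q | Q `<< P]].
Proof.
apply: ereal_sup_image_restrict => [Q []//|Q QP nQ|Q [/alpha_Qset -> _]//].
by apply: penalty_notQset => QQ; exact: nQ.
Qed.

Section dominated.
Variable P : probability T R.
Hypothesis Pbar_P : Pbar `<< P.

Lemma Qset_dominated_P Q : Qset Q -> Q `<< P.
Proof. by move=> /Qset_dominated QPbar; exact: null_dominates_trans QPbar Pbar_P. Qed.

Lemma rhoQ_reps X Y : measurable_fun setT X -> reps P X Y -> rhoQ Y = rhoQ X.
Proof.
move=> mX PY; congr ereal_sup; apply: eq_imagel => Q /Qset_dominated_P QP.
by rewrite (expect_reps QP mX PY).
Qed.

Lemma rhoQ_infsup_dominated X : Linf P X -> rhoQ_infsup P X = rhoQ X.
Proof.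
move=> LX; apply: ereal_inf_image_cst (Linf_reps LX) _ => Y.
exact: rhoQ_reps LX.1.
Qed.

Lemma rhoQ_supinf_dominated X : Linf P X -> rhoQ_supinf P X = rhoQ X.
Proof.
move=> LX; congr ereal_sup; apply: eq_imagel => Q QQ.
apply: ereal_inf_image_cst (Linf_reps LX) _ => Y PY.
by rewrite (expect_reps (Qset_dominated_P QQ) LX.1 PY).
Qed.

Lemma rhohat_dominated X : rhohat alpha P X = rhoQ X.
Proof. by rewrite rhohat_Qset setIidl //; exact: Qset_dominated_P. Qed.

End dominated.

Section singular.
Variables (P : probability T R) (A : set T).
Hypotheses (mA : measurable A) (Pbar_A : Pbar A = 0) (P_notA : P (~` A) = 0).

Lemma Qset_null Q : Qset Q -> Q A = 0.
Proof. by move=> /Qset_dominated /null_content_dominatesP; apply. Qed.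

Lemma Qset_not_dominated Q : Qset Q -> ~ Q `<< P.
Proof.
move=> QQ /null_content_dominatesP /(_ _ (measurableC mA) P_notA).
by rewrite probability_setC // Qset_null // sube0 => /eqP; rewrite eqe oner_eq0.
Qed.

Definition glue Y (c : R) : T -> R :=
  fun w => (Y w * \1_A w + c * \1_(~` A) w)%R.

Lemma measurable_glue Y c :
  measurable_fun setT Y -> measurable_fun setT (glue Y c).
Proof.
move=> mY; apply: measurable_funD; apply: measurable_funM => //.
exact/measurable_indic/measurableC.
Qed.

Lemma glue_notin Y c w : ~ A w -> glue Y c w = c.
Proof.
by move=> nAw; rewrite /glue !indicE in_setC (memNset nAw) mulr0 mulr1 add0r.
Qed.

Lemma glue_in Y c w : A w -> glue Y c w = Y w.
Proof.
by move=> Aw; rewrite /glue !indicE in_setC (mem_set Aw) mulr1 mulr0 addr0.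
Qed.

Lemma reps_glue X Y c :
  measurable_fun setT X -> reps P X Y -> reps P X (glue Y c).
Proof.
move=> mX /(repsP _ _ mX) [[mY [K YK]] YX]; apply/repsP => //; split.
  split; first exact: measurable_glue.
  exists (K + `|c|)%R => w; have [Aw|nAw] := pselect (A w).
    by rewrite glue_in // (le_trans (YK w)) // lerDl.
  by rewrite glue_notin // lerDr (le_trans _ (YK w)).
have P_A : {ae P, forall w, A w}.
  by exists (~` A); split => //; exact: measurableC.
by apply: filterS2 YX P_A => w YXw Aw /YXw <-; rewrite glue_in.
Qed.

Lemma expect_glue Q Y c : Qset Q -> measurable_fun setT Y ->
  expect Q (fun w => (- glue Y c w)%R) = (- c)%:E.
Proof.
move=> QQ mY; rewrite /expect (ae_eq_integral (cst (- c)%:E)) //.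
- rewrite integral_cst // -[RHS]mule1; congr (_ * _).
  exact: probability_setT.
- apply/measurable_EFinP; apply: measurable_funN; exact: measurable_glue.
- have Q_notA : {ae Q, forall w, ~ A w}.
    by exists A; split => //; [exact: Qset_null | move=> w /= /contrapT].
  by apply: filterS Q_notA => w nAw _; rewrite glue_notin.
Qed.

Lemma rhoQ_glue_le Y c : measurable_fun setT Y ->
  rhoQ (glue Y c) <= (- c)%:E - ereal_inf (alpha_t @` Qset).
Proof.
move=> mY; apply: ge_ereal_sup => _ [Q QQ <-]; rewrite expect_glue //.
by apply: leeB => //; apply: ereal_inf_lbound; exists Q.
Qed.

End singular.

Lemma rhohat_singular P X : singular Pbar P -> rhohat alpha P X = -oo.
Proof.
move=> [A [mA [Pbar_A P_notA]]]; rewrite rhohat_Qset.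
apply/ereal_sup_ninfty => x [Q [QQ QP] _].
by have := Qset_not_dominated mA Pbar_A P_notA QQ QP.
Qed.

Lemma rhoQ_infsup_singular P X : singular Pbar P -> Linf P X ->
  rhoQ_infsup P X = -oo.
Proof.
move=> [A [mA [Pbar_A P_notA]]] LX.
have [Y PY] := Linf_reps LX; have [[mY _] _] := PY.
apply: eq_ninfty => y.
have [r ry] : exists r : R, r%:E - ereal_inf (alpha_t @` Qset) <= y%:E.
  case: (ereal_inf _) alpha_t_lbound => [a| |] // _.
    by exists (y + a)%R; rewrite -EFinB addrK.
  by exists 0%R; rewrite addeNy leNye.
apply: ge_ereal_inf; exists (rhoQ (glue A Y (- r))).
  by exists (glue A Y (- r)) => //; exact: reps_glue LX.1 PY.
by apply: le_trans (rhoQ_glue_le mA Pbar_A (- r) mY) _; rewrite opprK.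
Qed.

Lemma rhoQ_supinf_singular P X : singular Pbar P -> Linf P X ->
  rhoQ_supinf P X = -oo.
Proof.
move=> PbarP LX; apply/eqP; rewrite -leeNy_eq -(rhoQ_infsup_singular PbarP LX).
exact: ereal_sup_inf_le_inf_sup.
Qed.

Lemma risk_measures_coincide P : Pbar `<< P \/ singular Pbar P ->
  forall X, Linf P X ->
  rhoP alpha P X = rhohat alpha P X /\ rhohat alpha P X = rhotilde alpha P X /\
  rhoQ_supinf P X = rhoQ_infsup P X /\ rhoQ_infsup P X = rhoP alpha P X.
Proof.
move=> PbarP X LX; rewrite rhoP_infsup (rhotilde_supinf LX).
case: PbarP => [PbarP|PbarP].
  by rewrite rhohat_dominated // rhoQ_infsup_dominated // rhoQ_supinf_dominated.
by rewrite rhohat_singular // rhoQ_infsup_singular // rhoQ_supinf_singular.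
Qed.

Lemma rhoP_dominated P X :
  Pbar `<< P -> Linf P X -> rhoP alpha P X = rho alpha X.
Proof.
by move=> PbarP LX; rewrite rhoP_infsup rhoQ_infsup_dominated // rho_rhoQ.
Qed.

Lemma rhoP_le_rhoP_Pbar P X : Linf P X -> Linf Pbar X ->
  rhoP alpha P X <= rhoP alpha Pbar X.
Proof.
move=> LPX LPbarX; have [Y [PY PbarY]] := Linf_common_reps LPX LPbarX.
rewrite [leRHS]rhoP_dominated // rho_rhoQ -(rhoQ_reps _ LPX.1 PbarY) //.
by rewrite -rho_rhoQ; exact: rhoP_le_rho.
Qed.

End penalty_on_Qset.

Theorem proposition3p10 (d : measure_display) (T : measurableType d) (R : realType)
  (Pbar : probability T R) (Qset : set (probability T R))
  (alpha_t alpha : probability T R -> \bar R) :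
  weak_closed Qset ->
  (forall Q, Qset Q -> Q `<< Pbar) ->
  (forall Q, Qset Q -> (alpha_t Q < +oo)%E) ->
  (-oo < ereal_inf (alpha_t @` Qset))%E ->
  (forall Q, Qset Q -> alpha Q = alpha_t Q) ->
  (forall Q, ~ Qset Q -> alpha Q = +oo%E) ->
  (forall X, bdd_meas X -> rho alpha X \is a fin_num) ->
  (forall P : probability T R, Pbar `<< P \/ singular Pbar P ->
     accP alpha P = acchat alpha P /\
     (forall X, Linf P X ->
        rhoP alpha P X = rhohat alpha P X /\
        rhohat alpha P X = rhotilde alpha P X /\
        ereal_sup [set ereal_inf [set (expect Q (fun w => (- Xt w)%R) - alpha_t Q)%E
                                  | Xt in reps P X] | Q in Qset]
        = ereal_inf [set ereal_sup [set (expect Q (fun w => (- Xt w)%R) - alpha_t Q)%E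
                                    | Q in Qset] | Xt in reps P X] /\
        ereal_inf [set ereal_sup [set (expect Q (fun w => (- Xt w)%R) - alpha_t Q)%E
                                  | Q in Qset] | Xt in reps P X]
        = rhoP alpha P X)) /\
  (forall P : probability T R, Pbar `<< P ->
     forall X, bdd_meas X -> rhoP alpha P X = rho alpha X) /\
  (forall P : probability T R, singular Pbar P ->
     forall X, Linf P X ->
       rhoP alpha P X = -oo%E /\ rhohat alpha P X = -oo%E /\
       rhotilde alpha P X = -oo%E) /\
  (forall (P : probability T R) X, bdd_meas X ->
     (rhohat alpha P X <= rhoP alpha P X)%E /\
     (rhoP alpha P X <= rho alpha X)%E /\
     rho alpha X = rhoP alpha Pbar X /\
     rhoP alpha Pbar X = rhohat alpha Pbar X) /\
  (forall (P : probability T R) X, Linf P X -> Linf Pbar X ->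
     (rhohat alpha P X <= rhoP alpha P X)%E /\
     (rhoP alpha P X <= rhoP alpha Pbar X)%E /\
     rhoP alpha Pbar X = rhohat alpha Pbar X).
Proof.
move=> _ Qdom _ alpha_t_lb alpha_Q alpha_notQ _.
have coincide := risk_measures_coincide Qdom alpha_t_lb alpha_Q alpha_notQ.
have rhoP_rho := rhoP_dominated Qdom alpha_Q alpha_notQ.
have Pbar_Pbar : Pbar `<< Pbar by [].
have rhoP_rhohat_Pbar X :
    Linf Pbar X -> rhoP alpha Pbar X = rhohat alpha Pbar X.
  by move=> /(coincide Pbar (or_introl Pbar_Pbar)) [].
split.
  move=> P PbarP; split; last exact: coincide.
  by apply: accP_eq_acchat => X /(coincide P PbarP) [].
split; first by move=> P PbarP X /(bdd_meas_Linf P); exact: rhoP_rho.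
split.
  move=> P PbarP X LX; have [-> [<- _]] := coincide P (or_intror PbarP) X LX.
  by rewrite (rhohat_singular Qdom alpha_Q).
split.
  move=> P X bX; split; first exact: rhohat_le_rhoP bX.1.
  split; first exact: rhoP_le_rho (reps_refl P bX).
  have LPbarX := bdd_meas_Linf Pbar bX.
  by rewrite -rhoP_rhohat_Pbar // rhoP_rho.
move=> P X LPX LPbarX; split; first exact: rhohat_le_rhoP LPX.1.
split; first exact: (rhoP_le_rhoP_Pbar Qdom alpha_Q alpha_notQ).
exact: rhoP_rhohat_Pbar.
Qed.
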